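(* Let $G=(\mathcal V,\mathcal E,a)$ and $G'=(\mathcal V',\mathcal E',a')$ be finite undirected graphs with discrete node attributes, let $u\in\mathcal V$, $u'\in\mathcal V'$ and $k\ge0$. If $\mathcal M(u,u')\neq\emptyset$, then $$\kappa^{(k+1)}_{\mathrm{subtree}}(u,u')=\delta(a(u),a'(u'))\max_{R\in\mathcal M(u,u')}\prod_{(v,v')\in R}\kappa^{(k)}_{\mathrm{subtree}}(v,v').$$
   Context: $\mathcal N(u)$ denotes the neighbors of $u$; $\delta$ is the Dirac kernel. Weisfeiler–Lehman relabeling: $a_0=a$, and $a_{i}(u)=f\big(a_{i-1}(u),\{\!\{a_{i-1}(v):v\in\mathcal N(u)\}\!\}\big)$ with $f$ an injective relabeling function shared by both graphs (similarly $a'_i$ on $G'$); $\kappa^{(i)}_{\mathrm{subtree}}(u,u')=\delta(a_i(u),a'_i(u'))$. $\mathcal M(u,u')$ is the set of sets $R\subseteq\mathcal N(u)\times\mathcal N(u')$ with $|R|=|\mathcal N(u)|=|\mathcal N(u')|$, such that for all $(v,v'),(w,w')\in R$, $v=w\Leftrightarrow v'=w'$, and $a(v)=a'(v')$ for all $(v,v')\in R$. An empty product equals $1$. *)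

From mathcomp Require Import all_boot.
From mathcomp Require Import finmap multiset.
Set Implicit Arguments. Unset Strict Implicit. Unset Printing Implicit Defensive.

(* A finite (simple) undirected graph on a finType V: symmetric irreflexive
   adjacency relation e.  Node attributes: a : V -> L (L a choiceType of labels). *)
Definition undirected_graph (V : finType) (e : rel V) :=
  symmetric e /\ irreflexive e.

Definition nbhd (V : finType) (e : rel V) (u : V) : {set V} := [set v | e u v].

Definition nbr_labels (V : finType) (L : choiceType) (e : rel V) (w : V -> L)
  (u : V) : multiset L := seq_mset [seq w v | v <- enum (nbhd e u)].

Fixpoint wl (V : finType) (L : choiceType) (f : L -> multiset L -> L)
  (e : rel V) (a : V -> L) (i : nat) : V -> L :=
  match i with
  | 0 => a
  | i.+1 => fun u => f (wl f e a i u) (nbr_labels e (wl f e a i) u)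
  end.

Definition dirac (L : eqType) (x y : L) : nat := (x == y).

Definition kappa_subtree (V V' : finType) (L : choiceType) (f : L -> multiset L -> L)
  (e : rel V) (a : V -> L) (e' : rel V') (a' : V' -> L) (i : nat) (u : V) (u' : V') : nat :=
  dirac (wl f e a i u) (wl f e' a' i u').

Definition in_M (V V' : finType) (L : eqType) (e : rel V) (a : V -> L)
  (e' : rel V') (a' : V' -> L) (u : V) (u' : V') (R : {set V * V'}) : bool :=
  [&& R \subset setX (nbhd e u) (nbhd e' u'),
      #|R| == #|nbhd e u|, #|R| == #|nbhd e' u'|,
      [forall p in R, forall q in R, (p.1 == q.1) == (p.2 == q.2)] &
      [forall p in R, a p.1 == a' p.2]].

From mathcomp Require Import all_boot.
From mathcomp Require Import finmap multiset.
Set Implicit Arguments. Unset Strict Implicit. Unset Printing Implicit Defensive.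

(* Both sides are 0/1-valued.  By injectivity of the relabelling function,
   a_{k+1}(u) = a'_{k+1}(u') holds iff a_k(u) = a'_k(u') and the multisets of
   level-k labels of the neighbourhoods agree, i.e. iff there is a bijection
   R : N(u) -> N(u') preserving level-k labels.  Equality at level k forces
   equality at every lower level, in particular a(u) = a'(u') and R is in
   M(u,u'); conversely such an R preserves the labels at every level <= k,
   which rebuilds a_{k+1}(u) = a'_{k+1}(u') by induction on the level. *)

Lemma prodn_bool (I : finType) (P B : pred I) :
  \prod_(i | P i) (B i : nat) = [forall (i | P i), B i].
Proof.
rewrite -big_andE; apply/esym/(big_morph nat_of_bool) => // b c.
by rewrite mulnb.
Qed.

Lemma bigmax_bool (I : finType) (P B : pred I) :
  \max_(i | P i) (B i : nat) = [exists (i | P i), B i].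
Proof.
rewrite -big_orE; apply/esym/(big_morph nat_of_bool) => // b c.
by case: b; case: c.
Qed.

Lemma perm_map_enum_onto (S T : finType) (h : S -> T) (R : {set S}) (A : {set T}) :
  {in R &, injective h} -> h @: R \subset A -> #|R| = #|A| ->
  perm_eq (map h (enum R)) (enum A).
Proof.
move=> h_inj sub_hR_A cardRA.
have hR_A : h @: R = A by apply/eqP; rewrite eqEcard sub_hR_A card_in_imset // cardRA leqnn.
apply: uniq_perm; rewrite ?enum_uniq ?map_inj_in_uniq ?enum_uniq //.
  by move=> x y; rewrite !mem_enum; apply: h_inj.
by move=> z; rewrite mem_enum -hR_A; apply/mapP/imsetP => -[x];
  by rewrite ?mem_enum => xR ->; exists x; rewrite ?mem_enum.
Qed.

Section Matching.
Variables (V V' : finType).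
Implicit Types (A : {set V}) (B : {set V'}) (R : {set V * V'}).

Definition one_to_one R := [forall p in R, forall q in R, (p.1 == q.1) == (p.2 == q.2)].

Definition matching A B R :=
  [&& R \subset setX A B, #|R| == #|A|, #|R| == #|B| & one_to_one R].

Definition label_preserving (L : eqType) (g : V -> L) (g' : V' -> L) R :=
  [forall p in R, g p.1 == g' p.2].

Lemma one_to_oneP R :
  reflect {in R &, forall p q, (p.1 == q.1) = (p.2 == q.2)} (one_to_one R).
Proof.
apply: (iffP forallP) => [R11 p q pR qR | R11 p].
  by move/implyP/(_ pR)/forallP/(_ q)/implyP/(_ qR)/eqP: (R11 p).
by apply/implyP => pR; apply/forallP => q; apply/implyP => qR; rewrite R11.
Qed.

Lemma label_preservingP (L : eqType) (g : V -> L) (g' : V' -> L) R :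
  reflect {in R, forall p, g p.1 = g' p.2} (label_preserving g g' R).
Proof.
apply: (iffP forallP) => [lR p pR | lR p].
  by move/implyP/(_ pR)/eqP: (lR p).
by apply/implyP => /lR ->.
Qed.

Lemma one_to_one_setU1 R x y :
  one_to_one R -> {in R, forall p, (x != p.1) && (y != p.2)} ->
  one_to_one ((x, y) |: R).
Proof.
move=> /one_to_oneP R11 fresh; apply/one_to_oneP => p q.
rewrite !in_setU1 => /predU1P[-> | pR] /predU1P[-> | qR] /=; rewrite ?eqxx //.
- by case/andP: (fresh q qR) => /negbTE -> /negbTE ->.
- by case/andP: (fresh p pR); rewrite ![p.1 == _]eq_sym ![p.2 == _]eq_sym => /negbTE -> /negbTE ->.
- exact: R11.
Qed.

Section LabelledMatching.
Variables (L : eqType) (g : V -> L) (g' : V' -> L).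

Lemma perm_eq_map_one_to_one (s : seq V) (t : seq V') :
  uniq s -> uniq t -> perm_eq (map g s) (map g' t) ->
  exists R, [/\ R \subset setX [set x in s] [set y in t], #|R| = size s,
                one_to_one R & label_preserving g g' R].
Proof.
elim: s t => [|x s IHs] t.
  case: t => [|y t] _ _ /perm_size //= _.
  by exists set0; rewrite sub0set cards0; split=> //; apply/forallP => p; rewrite inE.
move=> /= /andP[x_notin_s s_uniq] t_uniq perm_xs_t.
have /mapP[y y_in_t gxy] : g x \in map g' t by rewrite -(perm_mem perm_xs_t) mem_head.
have perm_s_t' : perm_eq (map g s) (map g' (rem y t)).
  rewrite -(perm_cons (g x)); apply: (perm_trans perm_xs_t).
  by rewrite gxy -map_cons; apply/perm_map/perm_to_rem.
have [R [sub_R cardR R11 lR]] := IHs _ s_uniq (rem_uniq _ t_uniq) perm_s_t'.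
have fresh : {in R, forall p, (x != p.1) && (y != p.2)}.
  move=> [p1 p2] /(subsetP sub_R); rewrite in_setX !inE /= => /andP[p1s p2t].
  apply/andP; split; first by apply: contraNneq x_notin_s => ->.
  by apply: contraTneq p2t => <-; rewrite (mem_rem_uniqF _ t_uniq).
have xy_notin_R : (x, y) \notin R by apply/negP => /fresh; rewrite !eqxx.
exists ((x, y) |: R); split.
- apply/subsetP => p; rewrite in_setU1 => /predU1P[-> | /(subsetP sub_R)].
    by rewrite in_setX !inE eqxx y_in_t.
  by rewrite !inE => /andP[-> /mem_rem ->]; rewrite orbT.
- by rewrite cardsU1 xy_notin_R cardR.
- exact: one_to_one_setU1.
- apply/label_preservingP => p; rewrite in_setU1 => /predU1P[-> // | pR].
  exact: (label_preservingP _ _ _ lR).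
Qed.

Lemma perm_eq_matching A B :
  perm_eq (map g (enum A)) (map g' (enum B)) ->
  exists R, matching A B R && label_preserving g g' R.
Proof.
move=> perm_AB.
have [R [sub_R cardR R11 lR]] :=
  perm_eq_map_one_to_one (enum_uniq _) (enum_uniq _) perm_AB.
exists R; move: sub_R cardR; rewrite !set_enum -cardE => sub_R cardR.
have cardAB : #|A| = #|B| by rewrite !cardE -(size_map g) (perm_size perm_AB) size_map.
by rewrite /matching sub_R cardR -cardAB eqxx R11 lR.
Qed.

Lemma matching_perm_eq A B R :
  matching A B R -> label_preserving g g' R ->
  perm_eq (map g (enum A)) (map g' (enum B)).
Proof.
case/and4P => sub_R /eqP cardRA /eqP cardRB /one_to_oneP R11 /label_preservingP lR.
have [sub1 sub2] : fst @: R \subset A /\ snd @: R \subset B.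
  by split; apply/subsetP => z /imsetP[[x y] /(subsetP sub_R)]; rewrite in_setX => /andP[] ? ? ->.
have perm1 : perm_eq (enum A) (map fst (enum R)).
  rewrite perm_sym; apply: perm_map_enum_onto => // p q pR qR eq1; apply/eqP.
  by rewrite -pair_eqE /pair_eq -R11 // andbb eq1 eqxx.
have perm2 : perm_eq (map snd (enum R)) (enum B).
  apply: perm_map_enum_onto => // p q pR qR eq2; apply/eqP.
  by rewrite -pair_eqE /pair_eq R11 // andbb eq2 eqxx.
apply: (perm_trans (perm_map g perm1)).
apply: (perm_trans _ (perm_map g' perm2)); rewrite -!map_comp.
suff -> : map (g \o fst) (enum R) = map (g' \o snd) (enum R) by [].
by apply/eq_in_map => p; rewrite mem_enum => /lR.
Qed.

End LabelledMatching.
End Matching.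

Lemma in_ME (V V' : finType) (L : eqType) (e : rel V) (a : V -> L)
    (e' : rel V') (a' : V' -> L) u u' R :
  in_M e a e' a' u u' R = matching (nbhd e u) (nbhd e' u') R && label_preserving a a' R.
Proof. by rewrite /in_M /matching -!andbA. Qed.

Lemma nbr_labels_eq_matching (V V' : finType) (L : choiceType) (e : rel V) (e' : rel V')
    (g : V -> L) (g' : V' -> L) u u' :
  nbr_labels e g u = nbr_labels e' g' u' <->
  exists R, matching (nbhd e u) (nbhd e' u') R && label_preserving g g' R.
Proof.
split=> [/eq_seq_msetP /perm_eq_matching // | [R /andP[mR lR]]].
exact/eq_seq_msetP/(matching_perm_eq mR lR).
Qed.

Section WeisfeilerLehman.
Variables (V V' : finType) (L : choiceType) (f : L -> multiset L -> L).
Hypothesis f_inj : forall x y (X Y : multiset L), f x X = f y Y -> x = y /\ X = Y.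
Variables (e : rel V) (a : V -> L) (e' : rel V') (a' : V' -> L).

Local Notation w := (wl f e a).
Local Notation w' := (wl f e' a').

Lemma wl_succ_eq j u u' :
  w j.+1 u = w' j.+1 u' <->
  w j u = w' j u' /\ nbr_labels e (w j) u = nbr_labels e' (w' j) u'.
Proof. by split=> [/f_inj // | [/= -> ->]]. Qed.

Lemma wl_eq_le j i u u' : w j u = w' j u' -> i <= j -> w i u = w' i u'.
Proof.
elim: j => [|j IHj] wj_eq; first by rewrite leqn0 => /eqP ->.
by rewrite leq_eqVlt ltnS => /predU1P[-> // | ]; apply: IHj; case/wl_succ_eq: wj_eq.
Qed.

Lemma label_preserving_wl_le (R : {set V * V'}) k i :
  label_preserving (w k) (w' k) R -> i <= k -> label_preserving (w i) (w' i) R.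
Proof.
by move=> /label_preservingP lR le_ik; apply/label_preservingP => p /lR /wl_eq_le; apply.
Qed.

Lemma wl_succ_eqE u u' k :
  (w k.+1 u == w' k.+1 u') =
  (a u == a' u') && [exists R, in_M e a e' a' u u' R && label_preserving (w k) (w' k) R].
Proof.
apply/eqP/andP => [/wl_succ_eq[wk_eq /nbr_labels_eq_matching[R /andP[mR lR]]] |].
  split; first exact/eqP/(wl_eq_le wk_eq (leq0n k)).
  apply/existsP; exists R; rewrite in_ME mR lR andbT.
  exact: (label_preserving_wl_le lR (leq0n k)).
case=> /eqP a_eq /existsP[R /andP[]]; rewrite in_ME => /andP[mR _] lR.
suff wj_eq j : j <= k.+1 -> w j u = w' j u' by apply: wj_eq.
elim: j => [// | j IHj] le_jk.
apply/wl_succ_eq; split; first exact/IHj/ltnW.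
by apply/nbr_labels_eq_matching; exists R; rewrite mR (label_preserving_wl_le lR).
Qed.

End WeisfeilerLehman.

Theorem lemma1 (V V' : finType) (L : choiceType) (f : L -> multiset L -> L)
  (f_inj : forall x y (X Y : multiset L), f x X = f y Y -> x = y /\ X = Y)
  (e : rel V) (a : V -> L) (e' : rel V') (a' : V' -> L)
  (hG : undirected_graph e) (hG' : undirected_graph e')
  (u : V) (u' : V') (k : nat) :
  (exists R : {set V * V'}, in_M e a e' a' u u' R) ->
  kappa_subtree f e a e' a' k.+1 u u' =
  dirac (a u) (a' u') *
  \max_(R : {set V * V'} | in_M e a e' a' u u' R)
     \prod_(p in R) kappa_subtree f e a e' a' k p.1 p.2.
Proof.
move=> _; rewrite /kappa_subtree /dirac (wl_succ_eqE f_inj) -mulnb.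
under eq_bigr => R _ do rewrite prodn_bool.
by rewrite bigmax_bool.
Qed.
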